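(* Let $n\geq 1$ and let $C_1,\ldots,C_n$ be finite cyclic groups whose orders are pairwise coprime. Then $$M^{(2)}\Big(C_1 * C_2 * \cdots * C_n\Big)\cong \bigoplus_{i=1}^{n} M^{(2)}(C_i),$$ where $C_1*\cdots*C_n$ denotes the free product of the $C_i$.
   Context: For a group $G$ with a free presentation $1\to R\to F\to G\to 1$ ($F$ free, $R\trianglelefteq F$), and an integer $c\geq 1$, the $c$-nilpotent multiplier of $G$ (the Baer-invariant of $G$ with respect to the variety of nilpotent groups of class at most $c$) is $M^{(c)}(G)=\dfrac{R\cap \gamma_{c+1}(F)}{[R,\,_cF]}$, where $\gamma_{k}(F)$ is the $k$-th term of the lower central series of $F$ ($\gamma_1(F)=F$, $\gamma_{k+1}(F)=[\gamma_k(F),F]$), $[R,\,_1F]=[R,F]$ and $[R,\,_cF]=[[R,\,_{c-1}F],F]$. This group is abelian and, up to isomorphism, independent of the chosen free presentation. $M^{(1)}(G)$ is the Schur multiplier. *)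

From mathcomp Require Import all_boot.
Set Implicit Arguments. Unset Strict Implicit. Unset Printing Implicit Defensive.

(* A (possibly infinite) group given by its operations.  No axioms are  *)
(* bundled: the only instances used below (free groups and finite       *)
(* direct products of them) are genuine groups.                         *)
Record grp := Grp {
  gcar :> Type;
  gmul : gcar -> gcar -> gcar;
  ginv : gcar -> gcar;
  gone : gcar }.

Section GroupNotions.
Variable G : grp.
Implicit Types (x y : G) (S A B : G -> Prop).

Definition gpow x (m : nat) : G := iter m (gmul x) (gone G).
Definition gconj x y : G := gmul (ginv y) (gmul x y).
Definition gcomm x y : G := gmul (ginv x) (gmul (ginv y) (gmul x y)).

Fixpoint all_in S (l : seq (G * bool)) : Prop :=
  match l with [::] => True | p :: l' => S p.1 /\ all_in S l' end.

Definition gen S : G -> Prop := fun x =>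
  exists l : seq (G * bool),
    all_in S l /\
    x = foldr (fun p acc => gmul (if p.2 then ginv p.1 else p.1) acc) (gone G) l.

Definition setTg : G -> Prop := fun _ => True.

Definition commsub A B : G -> Prop :=
  gen (fun z => exists a b, A a /\ B b /\ z = gcomm a b).

Fixpoint gamma (k : nat) : G -> Prop :=
  match k with
  | 0 | 1 => setTg
  | k'.+1 => commsub (gamma k') setTg
  end.

Fixpoint itcomm (R : G -> Prop) (c : nat) : G -> Prop :=
  match c with
  | 0 => R
  | c'.+1 => commsub (itcomm R c') setTg
  end.

Definition ncl S : G -> Prop := gen (fun z => exists s y, S s /\ z = gconj s y).

(* the c-nilpotent multiplier of the presentation 1 -> R -> F -> F/R -> 1
   is the quotient (mult_num R c) / (mult_den R c) *)
Definition mult_num (R : G -> Prop) (c : nat) : G -> Prop :=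
  fun x => R x /\ gamma c.+1 x.
Definition mult_den (R : G -> Prop) (c : nat) : G -> Prop := itcomm R c.
End GroupNotions.

(* Isomorphism of subquotients A/B (in G) and A'/B' (in H), B normal in A,
   B' normal in A': a map f : A -> A' inducing a bijective homomorphism
   A/B -> A'/B'. *)
Definition quot_iso (G H : grp) (A B : G -> Prop) (A' B' : H -> Prop) : Prop :=
  exists f : G -> H,
    [/\ (forall x, A x -> A' (f x)),
        (forall x y, A x -> A y ->
           B' (gmul (ginv (f (gmul x y))) (gmul (f x) (f y)))),
        (forall x, A x -> (B x <-> B' (f x))) &
        (forall y, A' y -> exists2 x, A x & B' (gmul (ginv (f x)) y))].

Definition prodgrp (I : Type) (G : grp) : grp :=
  @Grp (I -> G) (fun f g i => gmul (f i) (g i)) (fun f i => ginv (f i))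
       (fun _ => gone G).

(* Free group on an eqType X: freely reduced words over X x bool         *)
(* (true = inverse letter).                                             *)
Section FreeGroup.
Variable X : eqType.
Definition letter := (X * bool)%type.

Fixpoint reducedb (w : seq letter) : bool :=
  match w with
  | a :: ((b :: _) as w') => ~~ ((a.1 == b.1) && (a.2 != b.2)) && reducedb w'
  | _ => true
  end.

Definition cons_red (a : letter) (w : seq letter) : seq letter :=
  match w with
  | b :: w' => if (a.1 == b.1) && (a.2 != b.2) then w' else a :: w
  | [::] => [:: a]
  end.

Definition red (w : seq letter) : seq letter := foldr cons_red [::] w.

Lemma reducedb_tail a w : reducedb (a :: w) -> reducedb w.
Proof. by case: w => [|b w] //= /andP[]. Qed.

Lemma cons_red_reduced a w : reducedb w -> reducedb (cons_red a w).
Proof.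
case: w => [|b w] //= Hw.
case: ifP => Hc; first exact: (reducedb_tail Hw).
by rewrite /= Hc.
Qed.

Lemma red_reduced w : reducedb (red w).
Proof. by elim: w => [|a w IH] //=; apply: cons_red_reduced. Qed.

Definition FGtype := {w : seq letter | reducedb w}.
Definition mkFG (w : seq letter) : FGtype := exist _ (red w) (red_reduced w).
Definition flip (a : letter) : letter := (a.1, ~~ a.2).

Definition FG : grp :=
  @Grp FGtype (fun u v => mkFG (proj1_sig u ++ proj1_sig v))
       (fun u => mkFG (map flip (rev (proj1_sig u))))
       (mkFG [::]).

Definition fgen (x : X) : FG := mkFG [:: (x, false)].
End FreeGroup.

Definition cyc_rel (m : nat) : FG unit -> Prop :=
  ncl (fun z => z = gpow (fgen tt) m).

Definition freeprod_rel (n : nat) (m : 'I_n -> nat) : FG (ordinal n) -> Prop :=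
  ncl (fun z => exists i : 'I_n, z = gpow (fgen i) (m i)).

(* Let F be free on x_1, ..., x_n, R the normal closure of the r_i = x_i^(m_i),
   K = [R, F] and N = [R, F, F]; the free product has M^(2) = (R :&: gamma_3 F)/N,
   and each cyclic factor has trivial M^(2) since the free group of rank one is
   abelian, so it suffices to show that R :&: gamma_3 F is contained in N.
   Modulo K, R is generated by the central elements r_i, and the exponent sum of
   x_i, which kills gamma_2 F, shows that an element of R :&: gamma_3 F lies in K.
   Modulo N, K is generated by the central elements c_ij = [r_i, x_j], with
   c_ii = 1 and c_ij^(m_j) = c_ji^(-m_i); coprimality yields t_ij (i < j) with
   c_ij = t_ij^(m_i) and c_ji = t_ij^(-m_j), so every element of K is a product of
   powers of the t_ij modulo N.  The morphism from F onto the Heisenberg group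
   sending x_i and x_j to the two standard generators (and every other x_l to 1)
   kills gamma_3 F and N and reads off the exponent of t_ij, which must vanish. *)

From HB Require Import structures.
From mathcomp Require Import all_boot ssralg ssrint zify ring.

Set Implicit Arguments.
Unset Strict Implicit.
Unset Printing Implicit Defensive.

(** * Free groups *)

Section FreeReduction.
Variable X : eqType.
Implicit Types (a b : letter X) (u v w : seq (letter X)).

Lemma flipK : involutive (@flip X).
Proof. by case=> a1 a2; rewrite /flip /= negbK. Qed.

Lemma inverse_letterE a b : (a.1 == b.1) && (a.2 != b.2) = (b == flip a).
Proof.
case: a b => [a1 a2] [b1 b2]; rewrite /flip /= xpair_eqE eq_sym.
by case: a2; case: b2.
Qed.

Lemma cons_red_id a w : reducedb (a :: w) -> cons_red a w = a :: w.
Proof. by case: w => [|b w] //= /andP[/negbTE ->]. Qed.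

Lemma red_id w : reducedb w -> red w = w.
Proof.
elim: w => [|a w IH] //= Hw.
by rewrite IH ?(reducedb_tail Hw) // cons_red_id.
Qed.

Lemma cons_red_flipK a w : reducedb w -> cons_red (flip a) (cons_red a w) = w.
Proof.
case: w => [|b w] /=; first by rewrite /flip /= eqxx; case: a.2.
move=> Hw; case: ifP => [|_]; last by rewrite /= eqxx; case: a.2.
rewrite inverse_letterE => /eqP Hb; subst b; exact: cons_red_id.
Qed.

Lemma foldr_cons_red_reduced u w : reducedb w -> reducedb (foldr (@cons_red X) w u).
Proof. by move=> Hw; elim: u => [|a u IH] //=; apply: cons_red_reduced. Qed.

Lemma foldr_cons_red a u w : reducedb w ->
  foldr (@cons_red X) w (cons_red a u) = cons_red a (foldr (@cons_red X) w u).
Proof.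
case: u => [|b u] //= Hw; case: ifP => //=.
rewrite inverse_letterE => /eqP->; rewrite -{1}(flipK a) cons_red_flipK //.
exact: foldr_cons_red_reduced.
Qed.

Lemma foldr_red u w : reducedb w -> foldr (@cons_red X) w (red u) = foldr (@cons_red X) w u.
Proof. by move=> Hw; elim: u => [|a u IH] //=; rewrite foldr_cons_red // IH. Qed.

Lemma red_cat u v : red (u ++ v) = foldr (@cons_red X) (red v) u.
Proof. by rewrite /red foldr_cat. Qed.

Lemma red_redl u v : red (red u ++ v) = red (u ++ v).
Proof. by rewrite !red_cat foldr_red // red_reduced. Qed.

Lemma red_redr u v : red (u ++ red v) = red (u ++ v).
Proof. by rewrite !red_cat red_id // red_reduced. Qed.

Lemma red_flip_catl u w : reducedb w -> foldr (@cons_red X) w (map (@flip X) (rev u) ++ u) = w.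
Proof.
elim: u w => [|a u IH] w Hw //=.
rewrite rev_cons map_rcons -cats1 -catA /= foldr_cat /= cons_red_flipK.
  by rewrite -foldr_cat IH.
exact: foldr_cons_red_reduced.
Qed.

Lemma red_flip_catr u w : reducedb w -> foldr (@cons_red X) w (u ++ map (@flip X) (rev u)) = w.
Proof.
elim: u w => [|a u IH] w Hw //=.
rewrite rev_cons map_rcons -cats1 catA foldr_cat /= IH ?cons_red_reduced //.
by rewrite -{1}(flipK a) cons_red_flipK.
Qed.

End FreeReduction.

Local Open Scope group_scope.

Section FreeGroupType.
Variable X : choiceType.

Definition fgroup := FGtype X.
HB.instance Definition _ := [Choice of fgroup by <:].

Let fmul (u v : fgroup) : fgroup := @gmul (FG X) u v.
Let finv (u : fgroup) : fgroup := @ginv (FG X) u.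
Let fone : fgroup := gone (FG X).

Lemma fgroup_mulA : associative fmul.
Proof. by move=> [u Hu] [v Hv] [w Hw]; apply: val_inj; rewrite /= red_redl red_redr catA. Qed.

Lemma fgroup_mul1g : left_id fone fmul.
Proof. by move=> [u Hu]; apply: val_inj; rewrite /= red_id. Qed.

Lemma fgroup_mulg1 : right_id fone fmul.
Proof. by move=> [u Hu]; apply: val_inj; rewrite /= cats0 red_id. Qed.

Lemma fgroup_mulVg : left_inverse fone finv fmul.
Proof. by move=> [u Hu]; apply: val_inj; rewrite /= red_redl /red red_flip_catl. Qed.

Lemma fgroup_mulgV : right_inverse fone finv fmul.
Proof. by move=> [u Hu]; apply: val_inj; rewrite /= red_redr /red red_flip_catr. Qed.

HB.instance Definition _ := isGroup.Build fgroup
  fgroup_mulA fgroup_mul1g fgroup_mulg1 fgroup_mulVg fgroup_mulgV.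
End FreeGroupType.

Section FreeGroupLift.
Variables (X : choiceType) (T : groupType) (f : X -> T).

Definition letter_val (a : letter X) : T := if a.2 then (f a.1)^-1 else f a.1.
Definition word_val (w : seq (letter X)) : T := \prod_(a <- w) letter_val a.

Lemma word_val_cons_red a w : word_val (cons_red a w) = letter_val a * word_val w.
Proof.
rewrite /word_val; case: w => [|b w] /=; first by rewrite big_cons.
case: ifP => [|_]; last by rewrite big_cons.
rewrite inverse_letterE => /eqP->; rewrite !big_cons mulgA /letter_val /=.
by case: a.2; rewrite /= ?invgK ?mulVg ?mulgV mul1g.
Qed.

Lemma word_val_red w : word_val (red w) = word_val w.
Proof.
elim: w => [|a w IH] //=.
by rewrite word_val_cons_red IH /word_val big_cons.
Qed.

Definition fg_lift (u : fgroup X) : T := word_val (val u).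

Lemma fg_lift_is_morphism : monoid_morphism fg_lift.
Proof.
split=> [|u v]; first by rewrite /fg_lift /word_val /= big_nil.
by rewrite /fg_lift /= word_val_red /word_val big_cat.
Qed.

HB.instance Definition _ := isUMagmaMorphism.Build (fgroup X) T fg_lift
  fg_lift_is_morphism.

Lemma fg_lift_gen x : fg_lift (fgen x) = f x.
Proof. by rewrite /fg_lift /word_val /= big_seq1. Qed.

End FreeGroupLift.

(** * Subgroups given by predicates *)

Definition grp_of (G : groupType) : grp := Grp (@mul G) (@inv G) 1.

Definition subgroup_pred (G : groupType) (H : G -> Prop) :=
  [/\ H 1, forall a b, H a -> H b -> H (a * b) & forall a, H a -> H a^-1].

Definition normal_pred (G : groupType) (H : G -> Prop) :=
  subgroup_pred H /\ forall a g, H a -> H (a ^ g).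

Section Generation.
Variable G : groupType.
Local Notation gen := (@gen (grp_of G)).
Implicit Types (S H : G -> Prop) (a b g y z : G).

Lemma gen_ind S (P : G -> Prop) : P 1 ->
  (forall s y, S s -> P y -> P (s * y)) -> (forall s y, S s -> P y -> P (s^-1 * y)) ->
  forall y, gen S y -> P y.
Proof.
move=> P1 PM PV y [l [Hl ->]]; elim: l Hl => [|[s []] l IH] //= [Hs Hl].
  exact: PV (IH Hl).
exact: PM (IH Hl).
Qed.

Lemma gen_mem S s : S s -> gen S s.
Proof. by move=> Hs; exists [:: (s, false)]; rewrite /= mulg1. Qed.

Lemma gen_subgroup S : subgroup_pred (gen S).
Proof.
have genM y z : gen S y -> gen S z -> gen S (y * z).
  move=> Hy [lz [Hlz ->]]; move: y Hy; apply: gen_ind.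
  - by exists lz; rewrite mul1g.
  - by move=> s y Hs [l [Hl E]]; exists ((s, false) :: l); rewrite /= -E mulgA.
  - by move=> s y Hs [l [Hl E]]; exists ((s, true) :: l); rewrite /= -E mulgA.
split=> //; first by exists [::].
apply: gen_ind; first by rewrite invg1; exists [::].
  move=> s y Hs Hy; rewrite invgM; apply: genM => //.
  by rewrite -[s^-1]mulg1; exists [:: (s, true)].
by move=> s y Hs Hy; rewrite invgM invgK; apply: genM => //; apply: gen_mem.
Qed.

Lemma gen_min S H : subgroup_pred H -> (forall s, S s -> H s) -> forall y, gen S y -> H y.
Proof.
case=> H1 HM HV HS; apply: gen_ind => // s y Hs Hy; apply: HM => //.
  exact: HS.
exact/HV/HS.
Qed.

Lemma preim_subgroup (T : groupType) (f : UMagmaMorphism.type G T) (P : T -> Prop) :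
  subgroup_pred P -> subgroup_pred (fun y => P (f y)).
Proof.
case=> P1 PM PV; split => [|a b|a]; rewrite ?gmulf1 ?gmulfM ?gmulfV //.
  exact: PM.
exact: PV.
Qed.

Lemma gen_normal S : (forall s g, S s -> S (s ^ g)) -> normal_pred (gen S).
Proof.
move=> SJ; split=> [|a g]; first exact: gen_subgroup.
have [gen1 genM genV] := gen_subgroup S.
move: a; apply: (@gen_min S (fun a => gen S (a ^ g))) => [|s Hs].
  split=> [|a b Ha Hb|a Ha]; rewrite ?conj1g ?conjMg ?conjVg //.
  - exact: genM.
  - exact: genV.
exact/gen_mem/SJ.
Qed.

Lemma trivial_subgroup : subgroup_pred (fun a : G => a = 1).
Proof. by split=> [|a b -> ->|a ->]; rewrite ?mulg1 ?invg1. Qed.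

Lemma subgroup_expgn H a k : subgroup_pred H -> H a -> H (a ^+ k).
Proof. by case=> H1 HM _ Ha; elim: k => // k IH; rewrite expgS; apply: HM. Qed.

Lemma commute_subgroup s : subgroup_pred (G := G) (commute s).
Proof. by split=> [|a b|a]; [exact: commute1 | exact: commuteM | exact: commuteV]. Qed.

Lemma gen_abelian S : (forall s s', S s -> S s' -> commute s s') ->
  forall a b, gen S a -> gen S b -> commute a b.
Proof.
move=> SC a b Ha Hb.
have Sb s : S s -> commute s b.
  by move=> Hs; apply: (gen_min (commute_subgroup s)) Hb => s' Hs'; exact: SC.
by apply/commute_sym/(gen_min (commute_subgroup b) _ Ha) => s Hs; apply/commute_sym/Sb.
Qed.

End Generation.

Lemma fgroup_generated (X : choiceType) (u : fgroup X) :
  gen (G := grp_of (fgroup X)) (fun z => exists x, z = fgen x) u.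
Proof.
have [_ genM genV] := gen_subgroup (fun z : fgroup X => exists x, z = fgen x).
have genw w : gen (G := grp_of (fgroup X)) (fun z => exists x, z = fgen x) (mkFG w).
  elim: w => [|[x b] w IH]; first by exists [::].
  have -> : mkFG ((x, b) :: w) = (if b then (fgen x : fgroup X)^-1 else fgen x) * mkFG w.
    by apply: val_inj; rewrite /= red_redr; case: b.
  by apply: genM => //; case: b; [apply: genV|]; apply: gen_mem; exists x.
case: u => w Hw; have -> : exist _ w Hw = mkFG w by apply: val_inj; rewrite /= red_id.
exact: genw.
Qed.

Section CongruenceModNormal.
Variables (G : groupType) (N : G -> Prop).
Hypothesis nN : normal_pred N.
Implicit Types (a b c g : G).

Definition eqmod a b := N (a^-1 * b).

Definition central_mod a := forall g, N [~ a, g].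

Let N1 : N 1. Proof. by have [[? ? ?] _] := nN. Qed.
Let NM a b : N a -> N b -> N (a * b). Proof. by have [[_ ? _] _] := nN; auto. Qed.
Let NV a : N a -> N a^-1. Proof. by have [[_ _ ?] _] := nN; auto. Qed.
Let NJ a g : N a -> N (a ^ g). Proof. by have [_] := nN; apply. Qed.

Lemma eqmod_refl a : eqmod a a.
Proof. by rewrite /eqmod mulVg; apply: N1. Qed.

Lemma eqmod_sym a b : eqmod a b -> eqmod b a.
Proof. by move/NV; rewrite /eqmod invgM invgK. Qed.

Lemma eqmod_trans b a c : eqmod a b -> eqmod b c -> eqmod a c.
Proof. by move=> Hab /(NM Hab); rewrite /eqmod -mulgA mulVKg. Qed.

Lemma eqmodM a a' b b' : eqmod a a' -> eqmod b b' -> eqmod (a * b) (a' * b').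
Proof.
move=> Ha Hb; rewrite /eqmod.
have -> : (a * b)^-1 * (a' * b') = (a^-1 * a') ^ b * (b^-1 * b').
  by rewrite /conjg invgM !mulgA mulgK.
exact/NM/Hb/NJ.
Qed.

Lemma eqmodMl a a' b : eqmod a a' -> eqmod (a * b) (a' * b).
Proof. by move/eqmodM; apply; apply: eqmod_refl. Qed.

Lemma eqmodMr a b b' : eqmod b b' -> eqmod (a * b) (a * b').
Proof. exact/eqmodM/eqmod_refl. Qed.

Lemma eqmodV a b : eqmod a b -> eqmod a^-1 b^-1.
Proof.
move=> Hab; rewrite /eqmod invgK.
have -> : a * b^-1 = ((a^-1 * b)^-1) ^ b^-1 by rewrite /conjg !invgM !invgK !mulgA mulgV mul1g.
exact/NJ/NV.
Qed.

Lemma eqmodXn a b n : eqmod a b -> eqmod (a ^+ n) (b ^+ n).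
Proof. by move=> Hab; elim: n => [|n IH]; rewrite ?expgS; [apply: eqmod_refl | apply: eqmodM]. Qed.

Lemma eqmod1 a : eqmod a 1 <-> N a.
Proof. by rewrite /eqmod mulg1; split=> /NV; rewrite ?invgK. Qed.

Lemma eqmod_mulN a b : N b -> eqmod (a * b) a.
Proof. by move=> Hb; rewrite /eqmod invgM -mulgA mulVg mulg1; apply: NV. Qed.

Lemma central_modC a g : central_mod a -> eqmod (a * g) (g * a).
Proof. by move=> Ha; move/NV: (Ha g); rewrite invgR /eqmod /commg /conjg invgM !mulgA. Qed.

Lemma eqmod_expgMn a b n : central_mod b -> eqmod ((a * b) ^+ n) (a ^+ n * b ^+ n).
Proof.
move=> Hb; elim: n => [|n IH]; first by rewrite !expg0 mulg1; apply: eqmod_refl.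
rewrite !expgS; apply: eqmod_trans (eqmodMr _ IH) _.
by rewrite -!mulgA; apply: eqmodMr; rewrite !mulgA; apply/eqmodMl/central_modC.
Qed.

Lemma eqmod_prodM (I : Type) (r : seq I) (F F' : I -> G) :
  (forall i, central_mod (F' i)) ->
  eqmod (\prod_(i <- r) (F i * F' i)) (\prod_(i <- r) F i * \prod_(i <- r) F' i).
Proof.
move=> FC; elim: r => [|i r IH]; first by rewrite !big_nil mulg1; apply: eqmod_refl.
rewrite !big_cons; apply: eqmod_trans (eqmodMr _ IH) _.
by rewrite -!mulgA; apply: eqmodMr; rewrite !mulgA; apply/eqmodMl/central_modC.
Qed.

End CongruenceModNormal.

(** * Integer powers *)

Section IntPower.
Variable G : groupType.
Implicit Types (x : G) (z w : int).

Definition expgz x z : G := if z is Negz n then x ^- n.+1 else x ^+ `|z|%N.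

Lemma expgz_nat x (n : nat) : expgz x n = x ^+ n. Proof. by []. Qed.

Lemma expgzS x z : expgz x (z + 1)%R = expgz x z * x.
Proof.
case: z => [n|[|n]].
- have -> : (n%:Z + 1 = n.+1%:Z)%R by lia.
  exact: expgSr.
- by rewrite mulVg.
have -> : (Negz n.+1 + 1 = Negz n)%R by rewrite !NegzE; lia.
by rewrite /= [x ^+ n.+2]expgS invgM mulgVK.
Qed.

Lemma expgzD x z w : expgz x (z + w)%R = expgz x z * expgz x w.
Proof.
have expgzB1 z' : expgz x (z' - 1)%R = expgz x z' * x^-1.
  by rewrite -[in RHS](GRing.subrK 1%R z') expgzS mulgK.
elim/int_rec: w => [|n IH|n IH]; first by rewrite GRing.addr0 mulg1.
  by rewrite -[n.+1]addn1 PoszD GRing.addrA !expgzS IH mulgA.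
by rewrite -[n.+1]addn1 PoszD GRing.opprD GRing.addrA !expgzB1 IH mulgA.
Qed.

Lemma expgz1n z : expgz 1 z = 1.
Proof. by case: z => n; rewrite /= expg1n ?invg1. Qed.

Lemma subgroup_expgz (H : G -> Prop) x z : subgroup_pred H -> H x -> H (expgz x z).
Proof.
move=> sH Hx; have [_ _ HV] := sH.
by case: z => k /=; [|apply: HV]; apply: subgroup_expgn.
Qed.

Lemma morph_expgz (f : G -> int) x z :
  {morph f : a b / a * b >-> (a + b)%R} -> f (expgz x z) = (z * f x)%R.
Proof.
move=> fM; have f1 : f 1 = 0%R by have := fM 1 1; rewrite mulg1; lia.
have fV a : f a^-1 = (- f a)%R by have := fM a a^-1; rewrite mulgV f1; lia.
have fX k : f (x ^+ k) = (k%:Z * f x)%R.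
  elim: k => [|k IH]; first by rewrite f1 GRing.mul0r.
  by rewrite expgS fM IH; nia.
by case: z => k /=; rewrite ?fV fX // NegzE; nia.
Qed.

End IntPower.

Lemma gmulf_expgz (G T : groupType) (f : UMagmaMorphism.type G T) x z :
  f (expgz x z) = expgz (f x) z.
Proof. by case: z => n /=; rewrite ?gmulfV gmulfXn. Qed.

Section ModSpan.
Variables (G : groupType) (N P : G -> Prop) (J : finType) (g : J -> G).
Hypotheses (nN : normal_pred N) (sP : subgroup_pred P).
Hypotheses (PC : forall a, P a -> central_mod N a) (Pg : forall l, P (g l)).

Definition expprod (k : J -> int) : G := \prod_(l : J) expgz (g l) (k l).

Definition mod_span (y : G) := exists k, eqmod N y (expprod k).

Lemma expprodD k k' : eqmod N (expprod k * expprod k') (expprod (fun l => k l + k' l)%R).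
Proof.
apply: eqmod_sym => //; rewrite /expprod.
under eq_bigr do rewrite expgzD.
apply: (eqmod_prodM nN) => l; apply: PC; exact: subgroup_expgz.
Qed.

Lemma expprod0 : expprod (fun=> 0%R) = 1.
Proof. by rewrite /expprod big1. Qed.

Lemma expprod_delta l : expprod (fun l' => (l' == l)%:R%R) = g l.
Proof.
transitivity (\prod_(l' | l' == l) expgz (g l') (l' == l)%:R%R).
  by rewrite /expprod [RHS]big_mkcond; apply: eq_bigr => l' _; case: eqP.
by rewrite big_pred1_eq eqxx.
Qed.

Lemma mod_span_eqmod y z : eqmod N y z -> mod_span z -> mod_span y.
Proof. by move=> Hyz [k Hk]; exists k; apply: (eqmod_trans nN Hyz). Qed.

Lemma mod_span_gen l : mod_span (g l).
Proof. by exists (fun l' => (l' == l)%:R%R); rewrite expprod_delta; apply: eqmod_refl. Qed.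

Lemma mod_span_subgroup : subgroup_pred mod_span.
Proof.
split=> [|y z [k Hk] [k' Hk']|y [k Hk]].
- by exists (fun=> 0%R); rewrite expprod0; apply: eqmod_refl.
- by exists (fun l => k l + k' l)%R; apply: (eqmod_trans nN _ (expprodD k k')); apply: eqmodM.
exists (fun l => - k l)%R; apply: (eqmod_trans nN (eqmodV nN Hk)).
have : eqmod N (expprod k * expprod (fun l => - k l)%R) 1.
  have -> : 1 = expprod (fun l => k l - k l)%R.
    by rewrite /expprod big1 // => l _; rewrite GRing.subrr.
  exact: expprodD.
by move/(eqmodMr nN (expprod k)^-1); rewrite mulg1 mulKg => /eqmod_sym; apply.
Qed.

End ModSpan.

(** * The integral Heisenberg group *)

Record heis := Heis { ha : int; hb : int; hc : int }.

Definition heis_triple (u : heis) := (ha u, hb u, hc u).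
Definition triple_heis (t : int * int * int) := Heis t.1.1 t.1.2 t.2.
Lemma heis_tripleK : cancel heis_triple triple_heis. Proof. by case. Qed.
HB.instance Definition _ := Countable.copy heis (can_type heis_tripleK).

Section HeisenbergGroup.
Local Open Scope ring_scope.

(* The product of the unitriangular matrices [[1,a,c],[0,1,b],[0,0,1]]. *)
Definition heis_mul u v := Heis (ha u + ha v) (hb u + hb v) (hc u + hc v + ha u * hb v).
Definition heis_inv u := Heis (- ha u) (- hb u) (- hc u + ha u * hb u).
Definition heis_one := Heis 0 0 0.

Lemma heis_mulA : associative heis_mul.
Proof. by move=> [a b c] [a' b' c'] [a'' b'' c'']; congr Heis => /=; ring. Qed.

Lemma heis_mul1g : left_id heis_one heis_mul.
Proof. by move=> [a b c]; congr Heis => /=; ring. Qed.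

Lemma heis_mulg1 : right_id heis_one heis_mul.
Proof. by move=> [a b c]; congr Heis => /=; ring. Qed.

Lemma heis_mulVg : left_inverse heis_one heis_inv heis_mul.
Proof. by move=> [a b c]; congr Heis => /=; ring. Qed.

Lemma heis_mulgV : right_inverse heis_one heis_inv heis_mul.
Proof. by move=> [a b c]; congr Heis => /=; ring. Qed.

End HeisenbergGroup.

HB.instance Definition _ :=
  isGroup.Build heis heis_mulA heis_mul1g heis_mulg1 heis_mulVg heis_mulgV.

Section HeisenbergTheory.
Implicit Types (u v : heis) (c : int).

Definition heis_central u := ha u = 0%R /\ hb u = 0%R.

Lemma haM : {morph ha : u v / u * v >-> (u + v)%R}. Proof. by []. Qed.
Lemma hbM : {morph hb : u v / u * v >-> (u + v)%R}. Proof. by []. Qed.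

Lemma heis_commE u v : [~ u, v] = Heis 0 0 (ha u * hb v - ha v * hb u)%R.
Proof. by case: u v => [a b c] [a' b' c']; congr Heis => /=; ring. Qed.

Lemma heis_central_subgroup : subgroup_pred heis_central.
Proof.
split=> [//|u v [u1 u2] [v1 v2]|[a b c] [/= -> ->]]; last by [].
by rewrite /heis_central haM hbM u1 u2 v1 v2.
Qed.

Lemma heis_comm_central u v : heis_central [~ u, v].
Proof. by rewrite heis_commE. Qed.

Lemma heis_comm_central1 u v : heis_central u -> [~ u, v] = 1.
Proof.
by rewrite heis_commE => -[-> ->]; congr Heis; rewrite /= GRing.mul0r GRing.mulr0 GRing.subrr.
Qed.

Lemma heis_central_expgz c z : expgz (Heis 0 0 c) z = Heis 0 0 (z * c)%R.
Proof.
have HX k : Heis 0 0 c ^+ k = Heis 0 0 (k%:Z * c)%R.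
  elim: k => [|k IH]; first by rewrite GRing.mul0r.
  by rewrite expgS IH; congr Heis => /=; nia.
by case: z => k /=; rewrite HX //; congr Heis => /=; rewrite NegzE; nia.
Qed.

Lemma hc_prod_central (I : Type) (r : seq I) (F : I -> heis) :
  (forall i, ha (F i) = 0%R) -> hc (\prod_(i <- r) F i) = (\sum_(i <- r) hc (F i))%R.
Proof.
move=> F0; elim: r => [|i r IH]; first by rewrite !big_nil.
by rewrite !big_cons /= IH F0 GRing.mul0r GRing.addr0.
Qed.

End HeisenbergTheory.

Section Commutators.
Variable G : groupType.
Local Notation gen := (@gen (grp_of G)).
Local Notation commsub := (@commsub (grp_of G)).
Implicit Types (A B S : G -> Prop) (a b g h : G).

Lemma commMgJ a b g : [~ a * b, g] = [~ a, g] ^ b * [~ b, g].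
Proof. by rewrite /commg /conjg !invgM !mulgA !mulgK. Qed.

Lemma commgMJ a g h : [~ a, g * h] = [~ a, h] * [~ a, g] ^ h.
Proof. by rewrite /commg /conjg !invgM !mulgA !mulgK. Qed.

Lemma conjg_mulR a h : a ^ h = a * [~ a, h].
Proof. by rewrite /commg mulVKg. Qed.

Lemma commsub_normal A B : (forall a g, A a -> A (a ^ g)) ->
  (forall b g, B b -> B (b ^ g)) -> normal_pred (commsub A B).
Proof.
move=> AJ BJ; apply: gen_normal => _ g [a [b [Aa [Bb ->]]]].
by exists (a ^ g), (b ^ g); split; [exact: AJ | split; [exact: BJ | exact: conjRg]].
Qed.

Lemma central_mod_commsub A a : A a -> central_mod (commsub A (@setTg (grp_of G))) a.
Proof. by move=> Aa g; apply: gen_mem; exists a, g. Qed.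

Variables (N Q H : G -> Prop) (phi : G -> G).
Hypotheses (nN : normal_pred N) (sQ : subgroup_pred Q) (sH : subgroup_pred H).
Hypothesis Q_eqmod : forall y z, eqmod N y z -> Q z -> Q y.
Hypothesis phiM : forall a b, H a -> H b -> eqmod N (phi (a * b)) (phi a * phi b).

Lemma gen_eqmod_morph S : (forall s, S s -> H s /\ Q (phi s)) ->
  forall y, gen S y -> Q (phi y).
Proof.
move=> SHQ y Sy; have [Q1 QM QV] := sQ; have [H1 HM HV] := sH.
have phi1 : eqmod N (phi 1) 1.
  by apply/eqmod1 => //; have := phiM H1 H1; rewrite /eqmod mulg1 mulKg.
have phiV a : H a -> eqmod N (phi a^-1) (phi a)^-1.
  move=> Ha; have := phiM (HV _ Ha) Ha; rewrite mulVg => /(eqmod_trans nN (eqmod_sym nN phi1)).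
  by move/(eqmodMl nN (phi a)^-1); rewrite mul1g mulgK => /eqmod_sym; apply.
suff [] : H y /\ Q (phi y) by [].
apply: (@gen_min _ S (fun a => H a /\ Q (phi a))) Sy => //.
split=> [|a b [Ha Qa] [Hb Qb]|a [Ha Qa]].
- by split => //; apply: Q_eqmod phi1 Q1.
- by split; [apply: HM | apply: Q_eqmod (phiM Ha Hb) (QM _ _ Qa Qb)].
by split; [apply: HV | apply: Q_eqmod (phiV _ Ha) (QV _ Qa)].
Qed.

End Commutators.

(** * The 2-nilpotent multiplier of the free product *)

Section FreeProductMultiplier.
Variables (n : nat) (m : 'I_n -> nat).
Hypotheses (m_gt0 : forall i, 0 < m i) (m_coprime : forall i j, i != j -> coprime (m i) (m j)).

Local Notation F := (fgroup 'I_n).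
Local Notation gen := (@gen (grp_of F)).
Local Notation commsub := (@commsub (grp_of F)).
Local Notation R :=
  (@ncl (grp_of F) (fun z => exists i, z = @gpow (grp_of F) (fgen i) (m i))).
Local Notation K := (commsub R (@setTg _)).
Local Notation N := (commsub K (@setTg _)).
Implicit Types (a b g h y : F) (i j l : 'I_n).

Definition rel i : F := (fgen i : F) ^+ m i.

Lemma gconj_rel i h : gconj (gpow (fgen i) (m i)) h = rel i ^ h.
Proof. by rewrite /rel -iter_mulg_1. Qed.

Lemma R_relJ i h : R (rel i ^ h).
Proof.
by apply: gen_mem; exists (gpow (fgen i) (m i)), h; split; [exists i | rewrite gconj_rel].
Qed.

Lemma R_rel i : R (rel i).
Proof. by rewrite -[rel i]conjg1; apply: R_relJ. Qed.

Lemma R_normal : normal_pred R.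
Proof.
apply: gen_normal => _ g [s [h [Ss ->]]].
by exists s, (h * g); split=> //; rewrite /gconj -conjgM.
Qed.

Lemma K_normal : normal_pred K.
Proof. by apply: commsub_normal => // a g; case: R_normal => _; apply. Qed.

Lemma N_normal : normal_pred N.
Proof. by apply: commsub_normal => // a g; case: K_normal => _; apply. Qed.

Lemma K_comm a g : R a -> K [~ a, g].
Proof. by move=> Ra; apply: gen_mem; exists a, g. Qed.

Lemma N_comm a g : K a -> N [~ a, g].
Proof. by move=> Ka; apply: gen_mem; exists a, g. Qed.

Lemma eqmodJ_K a h : K a -> eqmod N (a ^ h) a.
Proof. by move=> Ka; rewrite conjg_mulR; apply/(eqmod_mulN N_normal)/N_comm. Qed.

Lemma commMg_mod a b g : R a -> eqmod N [~ a * b, g] ([~ a, g] * [~ b, g]).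
Proof. by move=> Ra; rewrite commMgJ; apply/(eqmodMl N_normal)/eqmodJ_K/K_comm. Qed.

Lemma commgM_mod a g h : R a -> eqmod N [~ a, g * h] ([~ a, g] * [~ a, h]).
Proof.
move=> Ra; rewrite commgMJ.
apply: (eqmod_trans N_normal (eqmodMr N_normal _ (eqmodJ_K _ (K_comm _ Ra)))).
by apply/(eqmod_sym N_normal)/(central_modC N_normal)/central_mod_commsub/K_comm.
Qed.

Lemma commgXn_mod a g k : R a -> eqmod N [~ a, g ^+ k] ([~ a, g] ^+ k).
Proof.
move=> Ra; elim: k => [|k IH]; first by rewrite commg1; apply: eqmod_refl N_normal _.
rewrite !expgS; apply: (eqmod_trans N_normal (commgM_mod _ _ Ra)).
exact: eqmodMr N_normal _ _ _ IH.
Qed.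

Lemma commJg_mod a h g : R a -> eqmod N [~ a ^ h, g] [~ a, g].
Proof.
move=> Ra; rewrite conjg_mulR; apply: (eqmod_trans N_normal (commMg_mod _ _ Ra)).
by apply/(eqmod_mulN N_normal)/N_comm/K_comm.
Qed.

Lemma R_mod_span y : R y -> mod_span K rel y.
Proof.
have [sR _] := R_normal.
have sK := mod_span_subgroup K_normal sR (fun a => @central_mod_commsub _ _ a) R_rel.
apply: (gen_min sK) => _ [s [h [[i ->] ->]]]; rewrite gconj_rel.
apply: (mod_span_eqmod K_normal _ (mod_span_gen rel K_normal i)).
by rewrite conjg_mulR; apply/(eqmod_mulN K_normal)/K_comm/R_rel.
Qed.

Definition heis_coord i j l : heis := Heis (l == i) (l == j) 0.
Local Notation psi i j := (fg_lift (heis_coord i j)).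

Lemma psi_commsub_central i j A B y : commsub A B y -> heis_central (psi i j y).
Proof.
move: y; apply: (gen_min (preim_subgroup (psi i j) heis_central_subgroup)).
move=> _ [a [b [_ [_ ->]]]].
by rewrite /= gmulfR; apply: heis_comm_central.
Qed.

Lemma psi_commsub1 i j A B y : (forall a, A a -> heis_central (psi i j a)) ->
  commsub A B y -> psi i j y = 1.
Proof.
move=> AC; move: y; apply: (gen_min (preim_subgroup (psi i j) (trivial_subgroup _))).
move=> _ [a [b [Aa [_ ->]]]].
by rewrite /= gmulfR; apply/heis_comm_central1/AC.
Qed.

Lemma ha_psi_rel i j l : ha (psi i j (rel l)) = ((m l)%:Z * (l == i))%R.
Proof. by rewrite /rel gmulfXn /= fg_lift_gen -expgz_nat (morph_expgz _ _ haM). Qed.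

Lemma hb_psi_rel i j l : hb (psi i j (rel l)) = ((m l)%:Z * (l == j))%R.
Proof. by rewrite /rel gmulfXn /= fg_lift_gen -expgz_nat (morph_expgz _ _ hbM). Qed.

Lemma ha_psi_expprod i e : ha (psi i i (expprod rel e)) = (e i * (m i)%:Z)%R.
Proof.
rewrite gmulf_prod (big_morph _ haM (erefl : ha 1 = 0%R)) (bigD1 i) //= big1 ?GRing.addr0.
  by rewrite gmulf_expgz (morph_expgz _ _ haM) ha_psi_rel eqxx GRing.mulr1.
move=> l /negbTE li.
by rewrite gmulf_expgz (morph_expgz _ _ haM) ha_psi_rel li !GRing.mulr0.
Qed.

Lemma R_gamma3_K y : R y -> gamma (G := grp_of F) 3 y -> K y.
Proof.
move=> Ry y3; have [e He] := R_mod_span Ry.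
have e0 i : e i = 0%R.
  have [yc _] := psi_commsub_central i i y3.
  have [dc _] := psi_commsub_central i i He.
  have := ha_psi_expprod i e; rewrite -(mulVKg y (expprod rel e)) gmulfM haM yc dc.
  by have := m_gt0 i; lia.
have e1 : expprod rel e = 1 by rewrite /expprod big1 // => i _; rewrite e0.
by apply/(eqmod1 K_normal); rewrite -e1.
Qed.

Definition c i j : F := [~ rel i, fgen j].

Definition bezout i j := egcdn (m i) (m j).

(* Bezout: for i < j, u m_i - v m_j = 1 makes t (i, j) an m_i-th root of c_ij and an
   m_j-th root of c_ji^-1 modulo N. *)
Definition t (p : 'I_n * 'I_n) : F :=
  let: (i, j) := p in
  if i < j then c i j ^+ (bezout i j).1 * c j i ^+ (bezout i j).2 else 1.

Lemma bezoutE i j : i != j -> ((bezout i j).1 * m i = (bezout i j).2 * m j + 1)%N.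
Proof.
move=> ij; rewrite /bezout; case: egcdnP => // km kn ->.
by move/eqnP: (m_coprime ij) => -> _.
Qed.

Lemma c_K i j : K (c i j).
Proof. exact/K_comm/R_rel. Qed.

Lemma t_K p : K (t p).
Proof.
have [[K1 KM _] _] := K_normal; case: p => i j /=; case: ifP => _; last exact: K1.
by apply: KM; apply: subgroup_expgn (K_normal.1) (c_K _ _).
Qed.

Lemma c_rel i j : eqmod N (c i j ^+ m j) (c j i ^+ m i)^-1.
Proof.
apply: (eqmod_trans N_normal (eqmod_sym N_normal (commgXn_mod _ _ (R_rel i)))).
rewrite -/(rel j) -invgR; apply: eqmodV N_normal _ _ _.
exact: commgXn_mod (R_rel j).
Qed.

Lemma c_eqmod_t i j : i < j -> eqmod N (c i j) (t (i, j) ^+ m i).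
Proof.
move=> ij; have /bezoutE Huv : i != j by rewrite neq_ltn ij.
rewrite /t ij; set u := (bezout i j).1 in Huv *; set v := (bezout i j).2 in Huv *.
have cancel_uv : c i j ^+ (u * m i) * (c i j ^+ m j)^-1 ^+ v = c i j.
  by rewrite Huv expVgn -expgnA addnC expgnDr expg1 [(m j * v)%N]mulnC mulgK.
apply/(eqmod_sym N_normal)/(eqmod_trans N_normal (eqmod_expgMn N_normal _ _ _)).
  by apply: central_mod_commsub; apply: subgroup_expgn; [exact: K_normal.1 | exact: c_K].
rewrite -!expgnA [(v * m i)%N]mulnC [c j i ^+ _]expgnA -{2}cancel_uv.
exact/(eqmodMr N_normal)/(eqmodXn N_normal)/c_rel.
Qed.

Lemma c_swap_eqmod_t i j : i < j -> eqmod N (c j i) (t (i, j) ^+ m j)^-1.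
Proof.
move=> ij; suff tm : eqmod N (t (i, j) ^+ m j) (c j i)^-1.
  by have := eqmodV N_normal tm; rewrite invgK => /(eqmod_sym N_normal).
have /bezoutE Huv : i != j by rewrite neq_ltn ij.
rewrite /t ij; set u := (bezout i j).1 in Huv *; set v := (bezout i j).2 in Huv *.
have cancel_uv : (c j i ^+ m i)^-1 ^+ u * c j i ^+ (v * m j) = (c j i)^-1.
  by rewrite expVgn -expgnA [(m i * u)%N]mulnC Huv expgnDr expg1 invgM mulgVK.
apply: (eqmod_trans N_normal (eqmod_expgMn N_normal _ _ _)).
  by apply: central_mod_commsub; apply: subgroup_expgn; [exact: K_normal.1 | exact: c_K].
rewrite -!expgnA [(u * m j)%N]mulnC [c i j ^+ _]expgnA -cancel_uv.
exact/(eqmodMl N_normal)/(eqmodXn N_normal)/c_rel.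
Qed.

Lemma t_span_subgroup : subgroup_pred (mod_span N t).
Proof. exact: mod_span_subgroup N_normal K_normal.1 (fun a => @central_mod_commsub _ _ a) t_K. Qed.

Lemma c_mod_span i j : mod_span N t (c i j).
Proof.
have [t1 _ tV] := t_span_subgroup.
have tX p k : mod_span N t (t p ^+ k).
  exact: subgroup_expgn t_span_subgroup (mod_span_gen t N_normal p).
case: (ltngtP i j) => [ij|ji|/val_inj<-].
- exact: (mod_span_eqmod N_normal (c_eqmod_t ij) (tX (i, j) (m i))).
- exact: (mod_span_eqmod N_normal (c_swap_eqmod_t ji) (tV _ (tX (j, i) (m i)))).
by rewrite /c /rel -invgR commgXg invg1.
Qed.

Lemma comm_rel_mod_span i g : mod_span N t [~ rel i, g].
Proof.
have sF : subgroup_pred (fun _ : F => True) by [].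
apply: (gen_eqmod_morph N_normal t_span_subgroup sF (mod_span_eqmod N_normal))
  (fgroup_generated g).
  by move=> a b _ _; apply: commgM_mod (R_rel i).
by move=> _ [j ->]; split=> //; apply: c_mod_span.
Qed.

Lemma comm_R_mod_span a g : R a -> mod_span N t [~ a, g].
Proof.
apply: (gen_eqmod_morph (phi := fun a => [~ a, g])
          N_normal t_span_subgroup R_normal.1 (mod_span_eqmod N_normal)).
  by move=> a' b Ra' _; apply: commMg_mod Ra'.
move=> _ [s [h [[i ->] ->]]]; rewrite gconj_rel.
split; first exact: R_relJ.
exact: (mod_span_eqmod N_normal (commJg_mod h g (R_rel i)) (comm_rel_mod_span i g)).
Qed.

Lemma K_mod_span y : K y -> mod_span N t y.
Proof. by apply: (gen_min t_span_subgroup) => _ [a [b [Ra [_ ->]]]]; apply: comm_R_mod_span. Qed.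

Lemma psi_c i j p q : psi i j (c p q) =
  Heis 0 0 ((m p)%:Z * ((p == i)%:Z * (q == j)%:Z - (q == i)%:Z * (p == j)%:Z))%R.
Proof.
rewrite /c gmulfR /= heis_commE ha_psi_rel hb_psi_rel fg_lift_gen /=.
by congr Heis; ring.
Qed.

Lemma psi_t i j p : i < j -> psi i j (t p) = Heis 0 0 (p == (i, j))%:Z.
Proof.
move=> ij; case: p => p q; rewrite /t xpair_eqE; case: ifP => pq; last first.
  rewrite gmulf1; case: (p =P i) => [pi|//]; case: (q =P j) => [qj|//].
  by rewrite pi qj ij in pq.
have /bezoutE Huv : p != q by rewrite neq_ltn pq.
have no_swap : (q == i) && (p == j) = false.
  apply/negP => /andP[/eqP qi /eqP pj]; rewrite -qi -pj in ij.
  by move: (ltn_trans ij pq); rewrite ltnn.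
(* The c-coordinate is u m_p - v m_q = 1 times an antisymmetric delta. *)
rewrite gmulfM !gmulfXn /= !psi_c -!expgz_nat !heis_central_expgz; congr Heis => /=.
rewrite -!PoszM !mulnb no_swap.
set A := (p == i) && (q == j); nia.
Qed.

Lemma hc_psi_expprod i j k : i < j -> hc (psi i j (expprod t k)) = k (i, j).
Proof.
move=> ij; have psi_tk p : psi i j (expgz (t p) (k p)) = Heis 0 0 (k p * (p == (i, j)))%R.
  by rewrite gmulf_expgz /= psi_t // heis_central_expgz.
rewrite gmulf_prod /= hc_prod_central => [|p]; last by rewrite psi_tk.
rewrite (bigD1 (i, j)) //= big1 => [|p /negbTE np]; rewrite psi_tk /= ?eqxx ?np.
  by rewrite GRing.mulr1 GRing.addr0.
by rewrite GRing.mulr0.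
Qed.

Lemma K_gamma3_N y : K y -> gamma (G := grp_of F) 3 y -> N y.
Proof.
move=> Ky y3; have [k Hk] := K_mod_span Ky.
have k0 i j : i < j -> k (i, j) = 0%R.
  move=> ij; rewrite -(hc_psi_expprod k ij) -(mulVKg y (expprod t k)) gmulfM /=.
  rewrite (psi_commsub1 (fun a => @psi_commsub_central i j _ _ a) y3).
  by rewrite (psi_commsub1 (fun a => @psi_commsub_central i j _ _ a) (Hk : N _)).
have e1 : expprod t k = 1.
  rewrite /expprod big1 // => -[p q] _; case: (ltnP p q) => [pq|qp].
    by rewrite k0.
  by rewrite /t ltnNge qp expgz1n.
by apply/(eqmod1 N_normal); rewrite -e1.
Qed.

Lemma freeprod_mult2_trivial y :
  mult_num (freeprod_rel m) 2 y -> mult_den (freeprod_rel m) 2 y.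
Proof. by case=> Ry y3; apply: K_gamma3_N (R_gamma3_K Ry y3) y3. Qed.
End FreeProductMultiplier.


Lemma fgroup_unit_commsub1 (A B : fgroup unit -> Prop) y :
  commsub (G := grp_of (fgroup unit)) A B y -> y = 1.
Proof.
have comm (a b : fgroup unit) : commute a b.
  apply: gen_abelian (fgroup_generated a) (fgroup_generated b) => _ _ [[] ->] [[] ->].
  exact: commute_refl.
apply: (gen_min (trivial_subgroup _)) => _ [a [b [_ [_ ->]]]].
exact/eqP/commgP/comm.
Qed.

Theorem corollary1p7 (n : nat) (m : 'I_n -> nat) :
  0 < n ->
  (forall i, 0 < m i) ->
  (forall i j, i != j -> coprime (m i) (m j)) ->
  quot_iso
    (mult_num (freeprod_rel m) 2) (mult_den (freeprod_rel m) 2)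
    (G := FG (ordinal n)) (H := prodgrp 'I_n (FG unit))
    (fun f : 'I_n -> FG unit => forall i, mult_num (cyc_rel (m i)) 2 (f i))
    (fun f : 'I_n -> FG unit => forall i, mult_den (cyc_rel (m i)) 2 (f i)).
Proof.
move=> _ m_gt0 m_coprime; exists (fun _ _ => 1 : fgroup unit); split.
- by move=> y _ i; split; exists [::].
- by move=> y z _ _ i; exists [::].
- move=> y Hy; split=> [_ i|_]; first by exists [::].
  exact: freeprod_mult2_trivial m_gt0 m_coprime _ Hy.
move=> f Hf; exists (1 : fgroup 'I_n); first by split; exists [::].
by move=> i; have [_ /fgroup_unit_commsub1 fi1] := Hf i; exists [::]; rewrite /= fi1.
Qed.
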